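(* Let $T=(V,E)$ be a tree rooted at $o$ with edge lengths $\ell:E\to\mathbb{R}_{>0}$. Let $X_1,X_2,X_3,X_4\subseteq V$ and $e\in E\cup V$. Then $\mathrm{mst}_e(X_1\cup X_2)\le \mathrm{mst}_e(X_1)+\mathrm{mst}_e(X_2)$, $\mathrm{mst}_e(X_2)+\mathrm{mst}_e(X_1\cup X_2\cup X_3)\le \mathrm{mst}_e(X_1\cup X_2)+\mathrm{mst}_e(X_2\cup X_3)$, and $\mathrm{mst}_e(X_1\cup X_2\cup X_3)+\mathrm{mst}_e(X_2\cup X_3\cup X_4)\le \mathrm{mst}_e(X_1\cup X_2)+\mathrm{mst}_e(X_2\cup X_3)+\mathrm{mst}_e(X_3\cup X_4)$.
   Context: For $v\in V$, $V_v$ is the set of descendants of $v$ in $T$ (including $v$); for an edge $e=(u,v)$ with $v$ the child, $V_e=V_v$. For $X\subseteq V$, $\mathrm{mst}(X)$ is the total length of the minimal subtree of $T$ containing $X\cup\{o\}$ (so $\mathrm{mst}(\emptyset)=0$), and for $e\in E\cup V$, $\mathrm{mst}_e(X)=\mathrm{mst}(V_e\cap X)$. *)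

From mathcomp Require Import all_boot all_order all_algebra.
Set Implicit Arguments. Unset Strict Implicit. Unset Printing Implicit Defensive.
Import Order.TTheory GRing.Theory Num.Theory.
Local Open Scope ring_scope.

(* A finite tree T = (V,E) rooted at o, given by its parent map par :
   par o = o and every vertex reaches o by iterating par.  The edge set is
   E = { (par v, v) | v <> o }; an edge is identified with its child v. *)
Definition rooted_tree (V : finType) (o : V) (par : V -> V) : Prop :=
  par o = o /\ forall v : V, connect (frel par) v o.

Definition edge (V : finType) (o : V) := {v : V | v != o}.

Definition desc (V : finType) (par : V -> V) (v : V) : {set V} :=
  [set u | connect (frel par) u v].

(* V_e for e in E ∪ V (inl = vertex, inr = edge (par v, v) with V_e = V_v) *)
Definition Vsub (V : finType) (o : V) (par : V -> V)
  (e : (V + edge o)%type) : {set V} :=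
  match e with inl v => desc par v | inr ev => desc par (val ev) end.

(* mst X : total length of the minimal subtree containing X ∪ {o}, i.e. of
   the union of the root paths of the x in X.  The edge (par v, v), v <> o,
   lies on it iff v is an ancestor-or-self of some x in X.  len v is the
   length of the edge (par v, v). *)
Definition mst (R : realFieldType) (V : finType) (o : V) (par : V -> V)
  (len : V -> R) (X : {set V}) : R :=
  \sum_(v : V | (v != o) && [exists x in X, connect (frel par) x v]) len v.

Arguments Vsub {V} o par e.
Arguments mst {R V} o par len X.

Definition mst_e (R : realFieldType) (V : finType) (o : V) (par : V -> V)
  (len : V -> R) (e : (V + edge o)%type) (X : {set V}) : R :=
  mst o par len (Vsub o par e :&: X).

Arguments mst_e {R V} o par len e X.

(* For fixed S, X |-> mst (S :&: X) sums the nonnegative edge lengths over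
   the edges lying on the root path of some x in S :&: X.  That edge set
   commutes with unions, so the function is a weighted coverage function,
   hence monotone and submodular.  The inequalities hold for every such set
   function: the second is submodularity at X1 :|: X2 and X2 :|: X3, whose
   intersection contains X2, and the third adds the second to subadditivity
   at X2 and X3 :|: X4. *)

From mathcomp Require Import all_boot all_order all_algebra.
Set Implicit Arguments.
Unset Strict Implicit.
Unset Printing Implicit Defensive.
Import Order.TTheory GRing.Theory Num.Theory.
Local Open Scope ring_scope.

Section SubmodularSetFunction.
Variables (R : numDomainType) (T : finType) (f : {set T} -> R).
Implicit Types A B C D : {set T}.
Hypothesis f_ge0 : forall A, 0 <= f A.
Hypothesis f_mono : forall A B, A \subset B -> f A <= f B.
Hypothesis f_submod : forall A B, f (A :|: B) + f (A :&: B) <= f A + f B.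

Lemma submod_subadditive A B : f (A :|: B) <= f A + f B.
Proof. by apply: le_trans (f_submod A B); rewrite lerDl. Qed.

Lemma submod_union3 A B C :
  f B + f (A :|: B :|: C) <= f (A :|: B) + f (B :|: C).
Proof.
have -> : A :|: B :|: C = (A :|: B) :|: (B :|: C).
  by rewrite setUA -[A :|: B :|: B]setUA setUid.
rewrite addrC; apply: le_trans (f_submod _ _); rewrite lerD2l.
by apply: f_mono; rewrite subsetI subsetUr subsetUl.
Qed.

Lemma submod_union4 A B C D :
  f (A :|: B :|: C) + f (B :|: C :|: D)
    <= f (A :|: B) + f (B :|: C) + f (C :|: D).
Proof.
have BCD_le : f (B :|: C :|: D) <= f B + f (C :|: D).
  by rewrite -setUA; apply: submod_subadditive.
apply: le_trans (lerD (lexx _) BCD_le) _.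
by rewrite addrA lerD2r addrC submod_union3.
Qed.

End SubmodularSetFunction.

Lemma sum_subset_le (R : numDomainType) (T : finType) (w : T -> R)
    (A B : {set T}) :
  A \subset B -> {in B, forall v, 0 <= w v} ->
  \sum_(v in A) w v <= \sum_(v in B) w v.
Proof.
move=> sAB w_ge0; rewrite [leRHS](big_setID A) /= (setIidPr sAB) lerDl.
by apply: sumr_ge0 => v /setDP[/w_ge0].
Qed.

Lemma sum_setU_setI (R : nmodType) (T : finType) (w : T -> R)
    (A B : {set T}) :
  \sum_(v in A :|: B) w v + \sum_(v in A :&: B) w v
    = \sum_(v in A) w v + \sum_(v in B) w v.
Proof.
rewrite (big_setID A) /= setUK setDUl setDv set0U.
rewrite [X in _ = _ + X](big_setID A) /= setIC -addrA.
by rewrite [_ + \sum_(v in _ :&: _) _]addrC.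
Qed.

Section WeightedCoverage.
Variables (R : numDomainType) (U T : finType) (c : {set U} -> {set T}).
Variable w : T -> R.
Hypothesis c_setU : {morph c : A B / A :|: B}.
Hypothesis w_ge0 : forall A, {in c A, forall v, 0 <= w v}.
Implicit Types A B : {set U}.

Definition coverage A : R := \sum_(v in c A) w v.

Lemma cover_subset A B : A \subset B -> c A \subset c B.
Proof. by move/setUidPr <-; rewrite c_setU subsetUl. Qed.

Lemma coverage_ge0 A : 0 <= coverage A.
Proof. by apply: sumr_ge0; apply: w_ge0. Qed.

Lemma coverage_mono A B : A \subset B -> coverage A <= coverage B.
Proof. by move/cover_subset/sum_subset_le; apply; apply: w_ge0. Qed.

Lemma coverage_submod A B :
  coverage (A :|: B) + coverage (A :&: B) <= coverage A + coverage B.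
Proof.
rewrite /coverage -[leRHS]sum_setU_setI c_setU lerD2l.
apply: sum_subset_le => [|v /setIP[/w_ge0 //]].
by rewrite subsetI !cover_subset // ?subsetIl ?subsetIr.
Qed.

End WeightedCoverage.

Section MinimalSubtree.
Variables (R : realFieldType) (V : finType) (o : V) (par : V -> V).
Variable len : V -> R.
Hypothesis len_gt0 : forall v, v != o -> 0 < len v.
Implicit Types A B X : {set V}.

Definition mst_edges (X : {set V}) : {set V} :=
  [set v | (v != o) && [exists x in X, connect (frel par) x v]].

Lemma mstE X : mst o par len X = \sum_(v in mst_edges X) len v.
Proof. by apply: eq_bigl => v; rewrite inE. Qed.

Lemma mst_edgesU : {morph mst_edges : A B / A :|: B}.
Proof.
move=> A B; apply/setP => v; rewrite !inE -andb_orr; congr (_ && _).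
apply/existsP/orP.
  by case=> x /andP[/setUP[xA|xB] xv]; [left|right]; apply/existsP; exists x;
     rewrite ?xA ?xB.
by case=> /existsP[x /andP[xX xv]]; exists x; rewrite inE xX ?orbT.
Qed.

Lemma len_ge0_mst_edges X : {in mst_edges X, forall v, 0 <= len v}.
Proof. by move=> v; rewrite inE => /andP[/len_gt0/ltW]. Qed.

Variable e : (V + edge o)%type.

Let cover_e X := mst_edges (Vsub o par e :&: X).

Lemma cover_eU : {morph cover_e : A B / A :|: B}.
Proof. by move=> A B; rewrite /cover_e setIUr mst_edgesU. Qed.

Lemma mst_e_coverage X : mst_e o par len e X = coverage cover_e len X.
Proof. exact: mstE. Qed.

Lemma mst_e_ge0 X : 0 <= mst_e o par len e X.
Proof.
by rewrite mst_e_coverage coverage_ge0 // => ?; apply: len_ge0_mst_edges.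
Qed.

Lemma mst_e_mono A B :
  A \subset B -> mst_e o par len e A <= mst_e o par len e B.
Proof.
rewrite !mst_e_coverage; apply: coverage_mono; first exact: cover_eU.
by move=> ?; apply: len_ge0_mst_edges.
Qed.

Lemma mst_e_submod A B :
  mst_e o par len e (A :|: B) + mst_e o par len e (A :&: B)
    <= mst_e o par len e A + mst_e o par len e B.
Proof.
rewrite !mst_e_coverage; apply: coverage_submod; first exact: cover_eU.
by move=> ?; apply: len_ge0_mst_edges.
Qed.

End MinimalSubtree.

Theorem lemma3p1 (R : realFieldType) (V : finType) (o : V) (par : V -> V)
  (len : V -> R) (Htree : rooted_tree o par)
  (Hlen : forall v : V, v != o -> 0 < len v)
  (X1 X2 X3 X4 : {set V}) (e : (V + edge o)%type) :
  [/\ mst_e o par len e (X1 :|: X2)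
        <= mst_e o par len e X1 + mst_e o par len e X2,
      mst_e o par len e X2 + mst_e o par len e (X1 :|: X2 :|: X3)
        <= mst_e o par len e (X1 :|: X2) + mst_e o par len e (X2 :|: X3)
    & mst_e o par len e (X1 :|: X2 :|: X3) + mst_e o par len e (X2 :|: X3 :|: X4)
        <= mst_e o par len e (X1 :|: X2) + mst_e o par len e (X2 :|: X3)
           + mst_e o par len e (X3 :|: X4)].
Proof.
have ge0 := mst_e_ge0 par Hlen e.
have mono := mst_e_mono par Hlen e.
have submod := mst_e_submod par Hlen e.
split; [exact: submod_subadditive | exact: submod_union3 | exact: submod_union4].
Qed.
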